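(* Let $\mathcal{S}_1,\dots,\mathcal{S}_n\subseteq\mathbb{R}^D$ be independent linear subspaces (i.e. $\sum_{\ell=1}^n d_\ell=\dim(\sum_\ell\mathcal{S}_\ell)$, $d_\ell=\dim\mathcal{S}_\ell$), and let $\mathcal{X}=\{\boldsymbol{x}_1,\dots,\boldsymbol{x}_N\}\subseteq\bigcup_\ell\mathcal{S}_\ell$ consist of unit-norm vectors such that each $\mathcal{S}_\ell$ contains at least $d_\ell$ points of $\mathcal{X}$ spanning $\mathcal{S}_\ell$. Let $k\ge\sum_\ell d_\ell$ and $t>0$ an integer. Run the following procedure with $\lambda=\infty$: (1) compute $\mathcal{X}_0=\mathcal{X}_0^{(k)}$ by farthest first search ($\mathcal{X}_0^{(1)}=\{\boldsymbol{x}_j\}$ for an arbitrary $j$; for $i=1,\dots,k-1$, $\mathcal{X}_0^{(i+1)}=\mathcal{X}_0^{(i)}\cup\{\boldsymbol{x}\}$ with $\boldsymbol{x}\in\arg\max_{\boldsymbol{x}_j\in\mathcal{X}}f_\infty(\boldsymbol{x}_j,\mathcal{X}_0^{(i)})$), and for each $j$ let $\boldsymbol{c}_j$ be an optimal solution of $\min_{\boldsymbol{c}\in\mathbb{R}^N}\|\boldsymbol{c}\|_1$ s.t. $\boldsymbol{x}_j=\sum_{i:\boldsymbol{x}_i\in\mathcal{X}_0}c_i\boldsymbol{x}_i$; (2) set $\tilde{\boldsymbol{c}}_j=\boldsymbol{c}_j/\|\boldsymbol{c}_j\|_2$ and, for all $i,j$, $W_{ij}=1$ if $\tilde{\boldsymbol{c}}_j$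 is one of the $t$ nearest neighbors of $\tilde{\boldsymbol{c}}_i$ (largest inner products with $\tilde{\boldsymbol{c}}_i$) and $\langle\tilde{\boldsymbol{c}}_j,\tilde{\boldsymbol{c}}_i\rangle>0$, and $W_{ij}=0$ otherwise; (3) set $\mathbf{A}=\mathbf{W}+\mathbf{W}^\top$. Then $\mathbf{A}$ has no wrong connections: $A_{ij}\neq0$ only if $\boldsymbol{x}_i$ and $\boldsymbol{x}_j$ lie in the same subspace.
   Context: $f_\infty(\boldsymbol{x}_j,\mathcal{X}_0):=\min_{\boldsymbol{c}\in\mathbb{R}^N}\|\boldsymbol{c}\|_1$ subject to $\boldsymbol{x}_j=\sum_{i:\boldsymbol{x}_i\in\mathcal{X}_0}c_i\boldsymbol{x}_i$, with value $\infty$ if infeasible. *)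

From HB Require Import structures.
From mathcomp Require Import all_boot all_order all_algebra.
From mathcomp Require Import all_classical all_reals ereal.
Set Implicit Arguments. Unset Strict Implicit. Unset Printing Implicit Defensive.
Import Order.TTheory GRing.Theory Num.Theory.
Local Open Scope ring_scope.
Local Open Scope classical_set_scope.

Section SubspaceClustering.
Variables (R : realType) (D N : nat).

Definition vnorm (v : 'rV[R]_D) : R := Num.sqrt (\sum_a v 0 a ^+ 2).

Definition l1norm (c : 'I_N -> R) : R := \sum_i `|c i|.
Definition l2norm (c : 'I_N -> R) : R := Num.sqrt (\sum_i c i ^+ 2).
Definition inner (c c' : 'I_N -> R) : R := \sum_i c i * c' i.
Definition normalize (c : 'I_N -> R) : 'I_N -> R := fun i => c i / l2norm c.

Definition represents (x : 'I_N -> 'rV[R]_D) (X0 : {set 'I_N}) (j : 'I_N)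
  (c : 'I_N -> R) : Prop := x j = \sum_(i in X0) c i *: x i.

(* f_infty(x_j, X0) := min ||c||_1 s.t. x_j = sum_{i in X0} c_i x_i ;
   +oo if infeasible (infimum of the empty set). *)
Definition f_inf (x : 'I_N -> 'rV[R]_D) (j : 'I_N) (X0 : {set 'I_N}) : \bar R :=
  ereal_inf [set (l1norm c)%:E | c in [set c | represents x X0 j c]].

Definition l1_optimal (x : 'I_N -> 'rV[R]_D) (X0 : {set 'I_N}) (j : 'I_N)
  (c : 'I_N -> R) : Prop :=
  represents x X0 j c /\
  forall c', represents x X0 j c' -> l1norm c <= l1norm c'.

Definition X0_at (sel : nat -> 'I_N) (i : nat) : {set 'I_N} :=
  [set sel (nat_of_ord m) | m : 'I_i].

Definition farthest_first (x : 'I_N -> 'rV[R]_D) (k : nat) (sel : nat -> 'I_N)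
  : Prop :=
  forall i, (0 < i < k)%N ->
    forall j, (f_inf x j (X0_at sel i) <= f_inf x (sel i) (X0_at sel i))%E.

Definition nearest_nbrs (ct : 'I_N -> 'I_N -> R) (t : nat)
  (Nb : 'I_N -> {set 'I_N}) : Prop :=
  forall i,
    [/\ Nb i \subset [set~ i],
        #|Nb i| = minn t N.-1
      & forall j j', j \in Nb i -> j' \notin Nb i -> j' != i ->
          inner (ct j') (ct i) <= inner (ct j) (ct i)].

Definition affinity_W (ct : 'I_N -> 'I_N -> R) (Nb : 'I_N -> {set 'I_N})
  : 'M[R]_N :=
  \matrix_(i, j) (if (j \in Nb i) && (0 < inner (ct j) (ct i)) then 1 else 0).

Definition affinity_A (ct : 'I_N -> 'I_N -> R) (Nb : 'I_N -> {set 'I_N})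
  : 'M[R]_N := affinity_W ct Nb + (affinity_W ct Nb)^T.

End SubspaceClustering.

From HB Require Import structures.
From mathcomp Require Import all_boot all_order all_algebra.
From mathcomp Require Import all_classical all_reals ereal.
Set Implicit Arguments. Unset Strict Implicit. Unset Printing Implicit Defensive.
Import Order.TTheory GRing.Theory Num.Theory.
Local Open Scope ring_scope.

(* If x_j lies in
   S_l, dropping from a representation of x_j the terms of points outside S_l
   leaves a representation, because by independence the dropped part, which
   lies both in S_l and in the sum of the other subspaces, is zero.  So an
   l1-optimal c_j is supported on points of S_l.  A positive inner product of
   normalized c_i and c_j needs a common support point, a nonzero vector lying
   in the subspaces of x_i and x_j, which are then equal by independence. *)

Section IndependentSubspaces.
Variables (F : fieldType) (D n : nat) (S : 'I_n -> 'M[F]_D).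
Hypothesis dxS : mxdirect (\sum_l S l).

Lemma sub_other_subspaces_eq0 l (v : 'rV[F]_D) :
  (v <= S l)%MS -> (v <= \sum_(l' | l' != l) S l')%MS -> v = 0.
Proof.
move=> vSl vS'; have /mxdirect_sumsP /(_ l isT) capS0 := dxS.
by apply/eqP; rewrite -submx0 -capS0 sub_capmx vSl.
Qed.

Lemma sub_two_subspaces_eq0 l l' (v : 'rV[F]_D) :
  l' != l -> (v <= S l)%MS -> (v <= S l')%MS -> v = 0.
Proof.
move=> l'l vSl vSl'; apply: (sub_other_subspaces_eq0 vSl).
exact: (sumsmx_sup l') vSl'.
Qed.

End IndependentSubspaces.

Section SubspacePreserving.
Variables (R : realType) (D n N : nat).
Variables (S : 'I_n -> 'M[R]_D) (x : 'I_N -> 'rV[R]_D).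
Hypothesis dxS : mxdirect (\sum_l S l).
Hypothesis x_in_union : forall j, exists l, (x j <= S l)%MS.

Definition restrict_to (P : pred 'I_N) (c : 'I_N -> R) : 'I_N -> R :=
  fun i => if P i then c i else 0.

Lemma l1norm_restrict P c :
  l1norm c = l1norm (restrict_to P c) + \sum_(i | ~~ P i) `|c i|.
Proof.
rewrite /l1norm (bigID P) [X in _ = X + _](bigID P) /= /restrict_to.
rewrite [X in _ = _ + X + _]big1 => [|i /negbTE ->]; last exact: normr0.
by rewrite addr0; congr (_ + _); apply: eq_bigr => i ->.
Qed.

Lemma represents_restrict X0 j c l :
  represents x X0 j c -> (x j <= S l)%MS ->
  represents x X0 j (restrict_to (fun i => x i <= S l)%MS c).
Proof.
rewrite /represents => xjE xjSl.
set u := \sum_(i in X0 | (x i <= S l)%MS) c i *: x i.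
set w := \sum_(i in X0 | ~~ (x i <= S l)%MS) c i *: x i.
have xj_uw : x j = u + w by rewrite xjE (bigID (fun i => x i <= S l)%MS).
have uSl : (u <= S l)%MS.
  by apply: summx_sub => i /andP[_ xiSl]; exact: scalemx_sub.
have w0 : w = 0.
  apply: (sub_other_subspaces_eq0 dxS (l := l)).
    have -> : w = x j - u by rewrite xj_uw addrC addKr.
    by rewrite addmx_sub // eqmx_opp.
  apply: summx_sub => i /andP[_ xiSl']; apply: scalemx_sub.
  have [l' xiSl] := x_in_union i.
  apply: (sumsmx_sup l' _ xiSl).
  by apply: contraNneq xiSl' => <-.
rewrite xj_uw w0 addr0 /u [RHS](bigID (fun i => x i <= S l)%MS) /=.
rewrite [X in _ = _ + X]big1 => [|i /andP[_ /negbTE xiSl']]; last first.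
  by rewrite /restrict_to xiSl' scale0r.
by rewrite addr0; apply: eq_bigr => i /andP[_ xiSl]; rewrite /restrict_to xiSl.
Qed.

Lemma l1_optimal_subspace_preserving X0 j c l m :
  l1_optimal x X0 j c -> (x j <= S l)%MS -> c m != 0 -> (x m <= S l)%MS.
Proof.
move=> [rep_c opt_c] xjSl; apply: contraNT => xmSl'.
have := opt_c _ (represents_restrict rep_c xjSl).
rewrite [X in X <= _](l1norm_restrict (fun i => x i <= S l)%MS).
rewrite gerDl => off_le0.
have off0 : \sum_(i | ~~ (x i <= S l)%MS) `|c i| = 0.
  by apply/eqP; rewrite eq_le off_le0 sumr_ge0.
by rewrite -normr_eq0 (psumr_eq0P _ off0).
Qed.

End SubspacePreserving.

Lemma inner_normalize_gt0 (R : realType) N (a b : 'I_N -> R) :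
  0 < inner (normalize a) (normalize b) -> exists m, a m != 0 /\ b m != 0.
Proof.
move=> inner_gt0; apply/not_existsP => disjoint_supp; move: inner_gt0.
rewrite /inner big1 ?ltxx // => i _; rewrite /normalize.
have [-> | ai0] := eqVneq (a i) 0; first by rewrite !mul0r.
have [-> | bi0] := eqVneq (b i) 0; first by rewrite mul0r mulr0.
by case: (disjoint_supp i).
Qed.

Lemma vnorm0 (R : realType) D : vnorm (0 : 'rV[R]_D) = 0.
Proof. by rewrite /vnorm big1 ?sqrtr0 // => a _; rewrite mxE expr0n. Qed.

Lemma affinity_A_neq0 (R : realType) N (ct : 'I_N -> 'I_N -> R) Nb i j :
  affinity_A ct Nb i j != 0 ->
  0 < inner (ct j) (ct i) \/ 0 < inner (ct i) (ct j).
Proof.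
rewrite /affinity_A /affinity_W !mxE.
case: ifP => [/andP[_ ?] _| _]; first by left.
by case: ifP => [/andP[_ ?] _| _]; [right | rewrite addr0 eqxx].
Qed.

Theorem theorem4 (R : realType) (D n N : nat)
  (S : 'I_n -> 'M[R]_D) (x : 'I_N -> 'rV[R]_D)
  (* independent subspaces: sum of dimensions = dimension of the sum *)
  (Hindep : (\sum_(l < n) \rank (S l))%N = \rank (\sum_(l < n) S l)%MS)
  (* X is a set of unit-norm points in the union of the subspaces *)
  (Hinj : injective x)
  (Hunion : forall j, exists l, (x j <= S l)%MS)
  (Hunit : forall j, vnorm (x j) = 1)
  (* each S_l is spanned by the points of X it contains *)
  (Hspan : forall l, (S l <= \sum_(j | (x j <= S l)%MS) <<x j>>)%MS)
  (k t : nat) (Hk : (\sum_(l < n) \rank (S l) <= k)%N) (Ht : (0 < t)%N)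
  (* step (1): farthest first search, then l1-optimal coefficients *)
  (sel : nat -> 'I_N) (Hsel : farthest_first x k sel)
  (C : 'I_N -> 'I_N -> R) (HC : forall j, l1_optimal x (X0_at sel k) j (C j))
  (* step (2): normalization and t nearest neighbours *)
  (Nb : 'I_N -> {set 'I_N})
  (HNb : nearest_nbrs (fun j => normalize (C j)) t Nb) :
  (* step (3): A = W + W^T has no wrong connections *)
  forall i j, affinity_A (fun j => normalize (C j)) Nb i j != 0 ->
    exists l, (x i <= S l)%MS /\ (x j <= S l)%MS.
Proof.
have dxS : mxdirect (\sum_l S l) by apply/mxdirectP; rewrite /= -Hindep.
have x_neq0 m : x m != 0.
  by apply: contra_neq (oner_neq0 R) => xm0; rewrite -(Hunit m) xm0 vnorm0.
have same_subspace a b : 0 < inner (normalize (C a)) (normalize (C b)) ->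
    exists l, (x a <= S l)%MS /\ (x b <= S l)%MS.
  move=> /inner_normalize_gt0 [m [Cam Cbm]].
  have [l xaSl] := Hunion a; have [l' xbSl'] := Hunion b.
  have xmSl := l1_optimal_subspace_preserving dxS Hunion (HC a) xaSl Cam.
  have xmSl' := l1_optimal_subspace_preserving dxS Hunion (HC b) xbSl' Cbm.
  have [l'l | l'l] := eqVneq l' l; first by exists l; rewrite -l'l in xaSl *.
  by have := sub_two_subspaces_eq0 dxS l'l xmSl xmSl'; move/eqP: (x_neq0 m).
move=> i j /affinity_A_neq0 [/same_subspace | /same_subspace] [l [? ?]].
  by exists l.
by exists l.
Qed.
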